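(* Let $e\in\mathbb{Z}_{\ge0}$ and let $A\subseteq\mathbb{R}^2$ be finite and not contained in any element of $\mathcal{C}_{\le e}$. Let $\mathcal{R}$ be the family of subsets $B\subseteq A$ with $|B|=\binom{e+2}{2}$ such that $B$ is not contained in any element of $\mathcal{C}_{\le e}$. Then \[ |\mathcal{R}|\geq\frac{1}{2^{\binom{e+2}{2}-1}}|A|. \]
   Context: For $k\in\mathbb{Z}^+$, a curve of degree $k$ is the zero set in $\mathbb{R}^2$ of a polynomial in $\mathbb{R}[x,y]$ of degree exactly $k$; $\mathcal{C}_k$ is the family of such curves, $\mathcal{C}_{\le k}:=\bigcup_{j=1}^k\mathcal{C}_j$, and $\mathcal{C}_{\le 0}:=\emptyset$. *)

From HB Require Import structures.
From mathcomp Require Import all_boot all_order all_algebra.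
From mathcomp Require Import finmap.
From mathcomp Require Import mpoly.
From mathcomp Require Import boolp reals.

Set Implicit Arguments.
Unset Strict Implicit.
Unset Printing Implicit Defensive.

Import Order.TTheory GRing.Theory Num.Theory.
Local Open Scope ring_scope.

Definition pt_vec (R : realType) (z : R * R) : 'I_2 -> R :=
  fun i => if val i == 0%N then z.1 else z.2.

Definition peval2 (R : realType) (p : {mpoly R[2]}) (z : R * R) : R :=
  p.@[pt_vec z].

(* total degree: msize p = deg p + 1 for p <> 0, msize 0 = 0 *)
Definition has_degree (R : realType) (p : {mpoly R[2]}) (k : nat) : Prop :=
  msize p = k.+1.

Definition is_curve (R : realType) (k : nat) (C : R * R -> Prop) : Prop :=
  (0 < k)%N /\ exists p : {mpoly R[2]}, has_degree p k /\
     C = (fun z => peval2 p z = 0).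

Definition in_curve_le (R : realType) (e : nat) (S : R * R -> Prop) : Prop :=
  exists k : nat, (1 <= k <= e)%N /\
    exists C : R * R -> Prop, is_curve k C /\ (forall z, S z -> C z).

From HB Require Import structures.
From mathcomp Require Import all_boot all_order all_algebra.
From mathcomp Require Import finmap.
From mathcomp Require Import mpoly.
From mathcomp Require Import boolp reals.
Import Order.TTheory GRing.Theory Num.Theory.
Local Open Scope ring_scope.
Set Implicit Arguments.
Unset Strict Implicit.
Unset Printing Implicit Defensive.

(* Let N = C(e+2,2) be the number of monomials of degree at most e in two
   variables.  Polynomials of degree at most e vanishing on a finite point set
   are the kernel of its evaluation matrix against these N monomials, so fewer
   than N points always lie on a curve of degree at most e.  Conversely, if a set
   B lying on no such curve has more than N points, its rows are linearly
   dependent; evaluating the dependency on the constant monomial shows that it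
   involves some point b other than a prescribed a, and every curve through
   B \ {b} then passes through b.  So a smallest such subset of A through a has
   exactly N points; every point of A lies in a member of R, whence
   |A| <= N |R| <= 2^(N-1) |R|. *)

Lemma underdetermined_system_nontrivial (F : fieldType) (I J : finType) (f : I -> J -> F) :
  (#|I| < #|J|)%N ->
  exists2 v : J -> F, (exists j, v j != 0) & forall i, \sum_j v j * f i j = 0.
Proof.
move=> ltIJ; pose M := \matrix_(j < #|J|, i < #|I|) f (enum_val i) (enum_val j).
have /rowV0Pn[u /sub_kermxP uM0 /rV0Pn[k uk]] : kermx M != 0.
  by rewrite kermx_eq0 /row_free neq_ltn (leq_ltn_trans (rank_leq_col M)).
exists (fun j => u 0 (enum_rank j)); first by exists (enum_val k); rewrite enum_valK.
move=> i; have /matrixP/(_ 0 (enum_rank i)) := uM0; rewrite !mxE => uMi.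
rewrite -[RHS]uMi (reindex _ (onW_bij _ (enum_rank_bij J))) /=.
by apply: eq_bigr => j _; rewrite !mxE !enum_rankK.
Qed.

Lemma card_pairs_leq n :
  #|[set x : 'I_n * 'I_n | (x.1 <= x.2)%N]| = 'C(n.+1, 2).
Proof.
rewrite -sum1dep_card
  -(pair_big_dep xpredT (fun (i j : 'I_n) => (i <= j)%N) (fun _ _ => 1%N)) /=.
rewrite -bin2_sum big_mkord (exchange_big_dep xpredT) //= big_ord_recl /= add0n.
apply: eq_bigr => j _; under eq_bigl => i do rewrite -ltnS.
by rewrite -(big_ord_widen _ (fun=> 1%N) (ltn_ord j)) sum1_card card_ord.
Qed.

Lemma mdeg2 (m : 'X_{1..2}) : mdeg m = (m ord0 + m ord_max)%N.
Proof. by rewrite mdegE big_ord_recl big_ord1; congr (_ + m _)%N; apply: val_inj. Qed.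

Lemma card_bmnm2 e : #|{: 'X_{1..2 < e.+1}}| = 'C(e.+2, 2).
Proof.
pose phi (m : 'X_{1..2 < e.+1}) : 'I_e.+1 * 'I_e.+1 :=
  (inord (m ord0), inord (mdeg m)).
have phiE m : ((phi m).1 : nat, (phi m).2 : nat) = (m ord0, mdeg m).
  have lt_deg := bmdeg m; rewrite /= !inordK //.
  by apply: leq_ltn_trans lt_deg; rewrite mdeg2 leq_addr.
have phi_inj : injective phi.
  move=> m1 m2 eq12; have := phiE m1; rewrite eq12 phiE; case=> eq0 eqdeg.
  apply/val_inj/mnmP => i.
  have [->|->] : i = ord0 \/ i = ord_max.
    by case: i => [[|[|]]] // ?; [left|right]; apply: val_inj.
  - by rewrite eq0.
  - by apply/eqP; rewrite -(eqn_add2l (m1 ord0)) -{2}eq0 -!mdeg2 eqdeg.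
rewrite -cardsT -(card_imset _ phi_inj) -card_pairs_leq.
apply: eq_card => -[a s]; rewrite inE /=; apply/imsetP/idP => [[m _ [-> ->]]|le_as].
  by have := phiE m; case=> -> ->; rewrite mdeg2 leq_addr.
pose m : 'X_{1..2} := [multinom if i == ord0 then val a else s - a | i < 2]%N.
have deg_m : mdeg m = s by rewrite mdeg2 !mnmE /= subnKC.
have lt_m : (mdeg m < e.+1)%N by rewrite deg_m.
exists (BMultinom lt_m) => //; apply/eqP; rewrite xpair_eqE.
by rewrite /phi /= deg_m !mnmE /= !inord_val !eqxx.
Qed.

Section LowDegreeCurves.

Variables (R : realType) (e : nat).

Local Notation Mon := 'X_{1..2 < e.+1}.

Definition mon_eval (m : Mon) (z : R * R) : R := peval2 'X_[bmnm m] z.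

Definition poly_of_coefs (v : Mon -> R) : {mpoly R[2]} :=
  \sum_(m : Mon) v m *: 'X_[bmnm m].

Lemma mcoeff_poly_of_coefs v (m : Mon) : (poly_of_coefs v)@_m = v m.
Proof.
rewrite raddf_sum (bigD1 m) //= mcoeffZ mcoeffX eqxx mulr1 big1 ?addr0 // => m' ne_m'm.
by rewrite mcoeffZ mcoeffX inj_eq ?(negbTE ne_m'm) ?mulr0 //; apply: val_inj.
Qed.

Lemma msize_poly_of_coefs v : (msize (poly_of_coefs v) <= e.+1)%N.
Proof.
apply: leq_trans (msize_sum _ _ _) _; apply/bigmax_leqP => m _.
by apply: leq_trans (msizeZ_le _ _) _; rewrite msizeX bmdeg.
Qed.

Lemma peval2_poly_of_coefs v z :
  peval2 (poly_of_coefs v) z = \sum_(m : Mon) v m * mon_eval m z.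
Proof. by rewrite /peval2 raddf_sum /=; apply: eq_bigr => m _; rewrite mevalZ. Qed.

Lemma poly_of_coefsK p : (msize p <= e.+1)%N -> poly_of_coefs (fun m => p@_m) = p.
Proof.
move=> size_p; apply/mpolyP => k; have [lt_k|ge_k] := ltnP (mdeg k) e.+1.
  exact: (mcoeff_poly_of_coefs _ (BMultinom lt_k)).
rewrite raddf_sum big1 /=; last first.
  move=> m _; rewrite mcoeffZ mcoeffX; case: eqP => [km|]; last by rewrite mulr0.
  by move: (bmdeg m); rewrite km ltnNge ge_k.
by apply/esym/eqP; rewrite mcoeff_eq0 msize_mdeg_ge // (leq_trans size_p).
Qed.

Lemma peval2_low_deg p z : (msize p <= e.+1)%N ->
  peval2 p z = \sum_(m : Mon) p@_m * mon_eval m z.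
Proof. by move=> size_p; rewrite -peval2_poly_of_coefs poly_of_coefsK. Qed.

Lemma msize_gt1_of_root (p : {mpoly R[2]}) z :
  p != 0 -> peval2 p z = 0 -> (1 < msize p)%N.
Proof.
move=> p_nz pz0; rewrite ltnNge; apply: contra p_nz => /msize1_polyC p_const.
by move: pz0; rewrite /peval2 p_const mevalC => ->.
Qed.

Lemma in_curve_leP S : in_curve_le e S <->
  exists p : {mpoly R[2]}, (1 < msize p <= e.+1)%N /\ forall z, S z -> peval2 p z = 0.
Proof.
split=> [[k [/andP[k_gt0 k_le] [C [[_ [p [deg_p ->]]] S_C]]]]|[p [/andP[gt1 le] S_p]]].
  by exists p; rewrite [msize p]deg_p !ltnS k_gt0 k_le.
move: gt1 le; case deg_p: (msize p) => [//|k]; rewrite !ltnS => k_gt0 k_le.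
exists k; split; first by rewrite k_gt0 k_le.
by exists (fun z => peval2 p z = 0); split=> //; split=> //; exists p.
Qed.

Lemma in_curve_le_sub (S T : R * R -> Prop) :
  (forall z, S z -> T z) -> in_curve_le e T -> in_curve_le e S.
Proof.
move=> ST /in_curve_leP[p [deg_p T_p]]; apply/in_curve_leP.
by exists p; split=> // z /ST /T_p.
Qed.

Lemma dependent_point_on_curves (K : finType) (pt : K -> R * R) (w : K -> R) k0 :
  (forall m : Mon, \sum_k w k * mon_eval m (pt k) = 0) -> w k0 != 0 ->
  forall p, (msize p <= e.+1)%N -> (forall k, k != k0 -> peval2 p (pt k) = 0) ->
  peval2 p (pt k0) = 0.
Proof.
move=> w_rel wk0 p size_p p_vanish.
have : \sum_k w k * peval2 p (pt k) = 0.
  under eq_bigr => k _ do rewrite (peval2_low_deg _ size_p) mulr_sumr.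
  rewrite exchange_big big1 //= => m _.
  rewrite -[RHS](mulr0 p@_m) -[X in _ = _ * X](w_rel m) mulr_sumr.
  by apply: eq_bigr => k _; rewrite mulrCA.
rewrite (bigD1 k0) //= big1 ?addr0 => [/eqP|k /p_vanish ->]; last by rewrite mulr0.
by rewrite mulf_eq0 (negbTE wk0) => /eqP.
Qed.

Section FinitePointSets.

Variable A : {fset (R * R)}.

Definition points_of (B : {set A}) (z : R * R) : Prop :=
  exists2 b : A, b \in B & val b = z.

Definition curve_generic (B : {set A}) : Prop := ~ in_curve_le e (points_of B).

Lemma in_curve_le_few_points (B : {set A}) b :
  b \in B -> (#|B| < #|{: Mon}|)%N -> in_curve_le e (points_of B).
Proof.
move=> bB ltB.
have lt_card : (#|{: {x : A | x \in B}}| < #|{: Mon}|)%N by rewrite card_sig.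
have [v [m vm_nz] v_B] := underdetermined_system_nontrivial
  (fun (x : {x : A | x \in B}) (m : Mon) => mon_eval m (val (val x))) lt_card.
have v_vanish x : x \in B -> peval2 (poly_of_coefs v) (val x) = 0.
  by move=> xB; rewrite peval2_poly_of_coefs (v_B (exist _ x xB)).
apply/in_curve_leP; exists (poly_of_coefs v).
split; last by move=> z [x xB <-]; apply: v_vanish.
rewrite msize_poly_of_coefs andbT (msize_gt1_of_root _ (v_vanish b bB)) //.
by apply: contraNneq vm_nz => v0; rewrite -(mcoeff_poly_of_coefs v m) v0 mcoeff0.
Qed.

Lemma curve_generic_remove (B : {set A}) a :
  a \in B -> curve_generic B -> (#|{: Mon}| < #|B|)%N ->
  exists2 b, (b \in B) && (b != a) & curve_generic (B :\ b).
Proof.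
move=> aB gen_B ltB.
have lt_card : (#|{: Mon}| < #|{: {x : A | x \in B}}|)%N by rewrite card_sig.
have [w w_nz w_rel] := underdetermined_system_nontrivial
  (fun (m : Mon) (x : {x : A | x \in B}) => mon_eval m (val (val x))) lt_card.
pose xa : {x : A | x \in B} := exist _ a aB.
have [x /andP[x_ne_a wx_nz]] : exists x, (x != xa) && (w x != 0).
  apply/existsP; apply: contraT; rewrite negb_exists => /forallP w0.
  have w_eq0 x : x != xa -> w x = 0 by move=> ne; apply/eqP; move: (w0 x); rewrite ne negbK.
  have sum_w : \sum_x w x = 0.
    rewrite -[RHS](w_rel bm0); apply: eq_bigr => y _.
    by rewrite /mon_eval mpolyX0 /peval2 meval1 mulr1.
  case: w_nz => y; have [->|/w_eq0 ->] := eqVneq y xa; last by rewrite eqxx.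
  by move: sum_w; rewrite (bigD1 xa) //= big1 ?addr0 => [->|z /w_eq0]; rewrite ?eqxx.
exists (val x).
  by rewrite (valP x); apply: contraNneq x_ne_a => x_a; apply/eqP/val_inj.
move=> /in_curve_leP[p [/andP[gt1 le] p_vanish]]; apply: gen_B; apply/in_curve_leP.
exists p; split=> [|_ [b bB <-]]; first by rewrite gt1 le.
have p_Bx y : y != x -> peval2 p (val (val y)) = 0.
  move=> y_ne_x; apply: p_vanish; exists (val y) => //.
  by rewrite !inE (valP y) (inj_eq val_inj) y_ne_x.
pose y : {x : A | x \in B} := exist _ b bB.
rewrite -[val b]/(val (val y)); have [->|] := eqVneq y x; last exact: p_Bx.
exact: (dependent_point_on_curves (pt := fun y => val (val y)) w_rel wx_nz le p_Bx).
Qed.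

Lemma curve_generic_subset_through (a : A) : curve_generic setT ->
  exists B : {set A}, [/\ a \in B, #|B| = #|{: Mon}| & curve_generic B].
Proof.
move=> gen_T; pose P (B : {set A}) := (a \in B) && `[< curve_generic B >].
have PT : P setT by rewrite /P inE asboolT.
have [B /andP[aB /asboolP gen_B] B_min] := arg_minnP (fun B : {set A} => #|B|) PT.
exists B; split=> //; apply/eqP; rewrite eqn_leq.
apply/andP; split; rewrite leqNgt; apply/negP.
- move=> /(curve_generic_remove aB gen_B)[b /andP[bB b_ne_a] gen_Bb].
  have := B_min (B :\ b); rewrite /P !inE eq_sym b_ne_a aB asboolT // (cardsD1 b B) bB.
  by rewrite ltnn => /(_ isT).
- by move=> /(in_curve_le_few_points aB).
Qed.

End FinitePointSets.

End LowDegreeCurves.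

Lemma card_le_uniform_cover (T : finType) (P : {set {set T}}) n :
  cover P = [set: T] -> {in P, forall B : {set T}, #|B| = n} ->
  (#|T| <= #|P| * n)%N.
Proof.
move=> covP cardP; rewrite -cardsT -covP -sum_nat_const.
by rewrite -(eq_bigr _ cardP) (leq_card_cover P).1.
Qed.

Theorem lemma16 (R : realType) (e : nat) (A : {fset (R * R)}) :
  ~ in_curve_le e (fun z => z \in A) ->
  let calR := [set B : {set A} |
                 (#|B| == 'C(e.+2, 2))%N &&
                 `[< ~ in_curve_le e (fun z => exists2 b : A, b \in B & val b = z) >] ] in
  (#|calR|%:R : R) >= (#|` A|%:R : R) / 2 ^+ ('C(e.+2, 2)).-1.
Proof.
move=> gen_A; cbv zeta; set calR := [set B : {set A} | _]; set N := 'C(e.+2, 2).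
have gen_T : curve_generic e (setT : {set A}).
  apply: contra_not gen_A; apply: in_curve_le_sub => z Az.
  by exists (FSetSub Az); rewrite ?inE.
have cover_calR : cover calR = setT.
  apply/eqP; rewrite eqEsubset subsetT /=; apply/subsetP => a _.
  have [B [aB card_B gen_B]] := curve_generic_subset_through a gen_T.
  by apply/bigcupP; exists B; rewrite // inE -card_bmnm2 card_B eqxx asboolT.
have card_A : (#|` A| <= #|calR| * N)%N.
  rewrite cardfE; apply: card_le_uniform_cover cover_calR _ => B.
  by rewrite inE => /andP[/eqP].
have N_le : (N <= 2 ^ N.-1)%N by rewrite -{1}(@prednK N) ?bin_gt0 // ltn_expl.
rewrite ler_pdivrMr ?exprn_gt0 // -natrX -natrM ler_nat.
exact: leq_trans card_A (leq_mul (leqnn _) N_le).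
Qed.
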